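(* Let $\tau$ be a veering triangulation of $M$. If $\alpha\in H_2(M,\partial M;\mathbb{Z})$ is carried by $\tau^{(2)}$ (i.e. $\alpha$, viewed in $H_2(M,\partial M;\mathbb{R})$, is represented by a nonnegative real cycle on the faces of $\tau$), then $\alpha$ is represented by a nonnegative integral cycle on the faces of $\tau$, and hence by an embedded oriented surface carried by $\tau^{(2)}$.
   Context: $M$ is an oriented 3-manifold which is the interior of a compact 3-manifold with nonempty boundary consisting of tori; $(M,\partial M)$ denotes the compact manifold obtained by truncating the ideal vertices, with its boundary. An ideal triangulation of $M$ is taut if each face is cooriented so that every ideal tetrahedron has exactly two faces whose coorientation points into it (bottom faces) and two pointing out (top faces), and, giving an edge of a tetrahedron angle $\pi$ if the coorientations of its two adjacent faces in that tetrahedron agree and $0$ otherwise, the angle sum around every edge of the triangulation is $2\pi$. A veering triangulation is a taut ideal triangulation whose edges are labeled right- or left-veering so that each tetrahedron admits an orientation-preserving isomorphism to the model veering tetrahedron: a thickened rhombus in $\mathbb{R}^2\times\mathbb{R}$ whose top edge (a diagonal) lies above its bottom edge (the other diagonal), whose four side edges are right-veering if of positive slope and left-veering if of negative slope. With the coorientations, the 2-skeleton $\tau^{(2)}$ is a transversely oriented branched surface whose branch locus is the union of edges. A nonnegative cycle on $\tau^{(2)}$ is an assignment of nonnegative weights to faces satisfying the matching conditions: for each edge $e$, the faces incident to $e$ are divided into the two sides of $e$, and the sum of weights on one side equals the sum on the other side; such a cycle defines a class in $H_2(M,\partial M;\mathbb{R})$. An oriented properly embedded surface is carried by $\tau^{(2)}$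 if it lies in a fibered neighborhood of $\tau^{(2)}$ positively transverse to the $I$-fibers. *)

From HB Require Import structures.
From mathcomp Require Import all_boot all_order all_algebra all_fingroup.
From mathcomp Require Import reals.
Set Implicit Arguments. Unset Strict Implicit. Unset Printing Implicit Defensive.
Import Order.TTheory GRing.Theory Num.Theory.

(* Each tetrahedron has vertices labelled 0..3 ('I_4); face k of a          *)
(* tetrahedron is the face opposite vertex k.  A tetrahedron-face x=(t,k)   *)
(* is glued to glue x = (t',k') via the vertex bijection gperm x : 'I_4 ->  *)
(* 'I_4 (sending k to k' and the vertices of face k to those of face k').   *)
(* Orientation convention: every tetrahedron is oriented by its vertex      *)
(* order (0,1,2,3); the manifold is oriented consistently iff every gluing  *)
(* permutation is odd.                                                      *)

Record triangulation := Triangulation {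
  tet : finType;
  glue : tet * 'I_4 -> tet * 'I_4;
  gperm : tet * 'I_4 -> {perm 'I_4}
}.

Section Defs.
Variable T : triangulation.
Local Notation TT := (tet T).

(* oriented tetrahedron-edges (t, i, j): the edge from vertex i to j of t *)
Definition edge_step (e e' : TT * 'I_4 * 'I_4) : bool :=
  let: (t, i, j) := e in
  [exists k : 'I_4, [&& k != i, k != j, i != j &
     e' == ((glue (t, k)).1, gperm (t, k) i, gperm (t, k) j)]].

Definition edge_eq : rel (TT * 'I_4 * 'I_4) := connect edge_step.

Definition ideal_triangulation : Prop :=
  [/\ forall x : TT * 'I_4, glue (glue x) = x,
      forall x : TT * 'I_4, glue x != x,
      forall x : TT * 'I_4, gperm x x.2 = (glue x).2,
      forall x : TT * 'I_4, gperm (glue x) = (gperm x)^-1%g &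
   [/\ forall x : TT * 'I_4, odd_perm (gperm x) &
      forall (t : TT) (i j : 'I_4), i != j -> ~~ edge_eq (t, i, j) (t, j, i)]].

(* Coorientations: top x = true iff the coorientation of face x points out
   of the tetrahedron x.1 (x is a top face of x.1). *)
Definition pi_angle (top : TT * 'I_4 -> bool) (e : TT * 'I_4 * 'I_4) : bool :=
  let: (t, i, j) := e in
  [forall k : 'I_4, forall l : 'I_4,
     [&& k != i, k != j, l != i & l != j] ==> (top (t, k) == top (t, l))].

Definition taut (top : TT * 'I_4 -> bool) : Prop :=
  [/\ forall x : TT * 'I_4, top (glue x) = ~~ top x,
      forall t : TT, #|[set k : 'I_4 | top (t, k)]| = 2%N &
      (* angle sum 2 pi around every edge: exactly two angles pi *)
      forall (t : TT) (i j : 'I_4), i != j ->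
        #|[set e' | edge_eq (t, i, j) e' && pi_angle top e']| = 2%N].

Definition even4 (a b c d : 'I_4) : bool :=
  ~~ odd ((b < a) + (c < a) + (d < a) + (c < b) + (d < b) + (d < c))%N.

(* Model veering tetrahedron:
   rhombus with vertices W=(-1,0), E=(1,0) (top diagonal WE, at height 1),
   S=(0,-1), N=(0,1) (bottom diagonal SN, at height 0); (W,E,S,N) is
   positively oriented; positive-slope sides WN, ES are right-veering,
   negative-slope sides NE, SW are left-veering.  An orientation preserving
   isomorphism sends (W,E,S,N) to an even sequence (a,b,c,d) of vertices of t,
   the top faces (those containing the top edge ab) being opposite c and d. *)
Definition veering (top : TT * 'I_4 -> bool)
    (right : TT * 'I_4 * 'I_4 -> bool) : Prop :=
  [/\ taut top,
      forall (t : TT) (i j : 'I_4), right (t, i, j) = right (t, j, i),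
      forall e e', edge_eq e e' -> right e = right e' &
      forall t : TT, exists a b c d : 'I_4,
        [/\ uniq [:: a; b; c; d], even4 a b c d,
            [/\ ~~ top (t, a), ~~ top (t, b), top (t, c) & top (t, d)] &
            [/\ right (t, a, d), right (t, b, c),
                ~~ right (t, a, c) & ~~ right (t, b, d)]]].

(* A weight function is w : TT * 'I_4 -> V with w (glue x) = w x (one value *)
(* per face of the triangulation).  Faces are oriented by their             *)
(* coorientation together with the orientation of M.                        *)

Definition fourth (k i j : 'I_4) : 'I_4 :=
  odflt k [pick l : 'I_4 | [&& l != k, l != i & l != j]].

(* side of the edge (t,i,j) on which face (t,k) lies: +1 / -1 (this is the
   coefficient of the oriented edge i->j in the boundary of the
   coorientation-oriented face) *)
Definition fsign (top : TT * 'I_4 -> bool) (t : TT) (k i j : 'I_4) : int :=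
  ((if top (t, k) then 1 else -1) *
   (if even4 k i j (fourth k i j) then 1 else -1))%R.

Definition is_cycle (R : pzRingType) (top : TT * 'I_4 -> bool)
    (w : TT * 'I_4 -> R) : Prop :=
  (forall x : TT * 'I_4, w (glue x) = w x) /\
  forall (t0 : TT) (i0 j0 : 'I_4), i0 != j0 ->
    (\sum_(f : TT * 'I_4 * 'I_4 | edge_eq (t0, i0, j0) f)
       \sum_(k : 'I_4 | (k != f.1.2) && (k != f.2))
          (fsign top f.1.1 k f.1.2 f.2)%:~R * w (f.1.1, k) = 0)%R.

Definition bd (top : TT * 'I_4 -> bool) (t : TT) (x : TT * 'I_4) : int :=
  (\sum_(k : 'I_4 | ((t, k) == x) || (glue (t, k) == x))
     (if top (t, k) then 1 else -1))%R.

End Defs.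

From HB Require Import structures.
From mathcomp Require Import all_boot all_order all_algebra all_fingroup.
From mathcomp Require Import reals.
From mathcomp Require Import lra zify.
Import Order.TTheory GRing.Theory Num.Theory.
Local Open Scope ring_scope.

(* If [w = z + bd c] is a nonnegative real cycle homologous to the integral
   cycle [z], with [c] a real 3-chain, then [v = z + bd (floor c)] is an
   integral cycle homologous to [z], since the boundary of every tetrahedron
   is a cycle.  The weight of a face in [bd c] is [+-(c t - c t')], where [t]
   and [t'] are the tetrahedra on its two sides; as
   [floor a - floor a' > a - a' - 1], every weight of [v] is an integer
   greater than the corresponding weight of [w] minus one, hence is
   nonnegative. *)

Ltac case_I4 x := case: x => [[|[|[|[|//]]]] ?].

Lemma exists_uniq3 {i j : 'I_4} : i != j -> exists k : 'I_4, uniq [:: k; i; j].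
Proof.
case_I4 i; case_I4 j => //= _;
  first [ by exists (@Ordinal 4 0 isT) | by exists (@Ordinal 4 1 isT)
        | by exists (@Ordinal 4 2 isT) ].
Qed.

Lemma exists_uniq4 {k i j : 'I_4} : uniq [:: k; i; j] -> exists l : 'I_4, uniq [:: k; i; j; l].
Proof.
case_I4 k; case_I4 i; case_I4 j => //= _;
  first [ by exists (@Ordinal 4 0 isT) | by exists (@Ordinal 4 1 isT)
        | by exists (@Ordinal 4 2 isT) | by exists (@Ordinal 4 3 isT) ].
Qed.

Lemma uniq4_last {k i j l m : 'I_4} :
  uniq [:: k; i; j; l] -> uniq [:: k; i; j; m] -> l = m.
Proof. by case_I4 k; case_I4 i; case_I4 j; case_I4 l; case_I4 m => // _ _; apply/val_inj. Qed.

Lemma uniq4_swap_ends {a b c d : 'I_4} : uniq [:: a; b; c; d] -> uniq [:: d; b; c; a].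
Proof. by case_I4 a; case_I4 b; case_I4 c; case_I4 d. Qed.

Lemma fourthP {k i j : 'I_4} : uniq [:: k; i; j] -> uniq [:: k; i; j; fourth k i j].
Proof.
move=> kij; have [l kijl] := exists_uniq4 kij.
rewrite /fourth; case: pickP => [m /and3P[mk mi mj] | no_m].
  by move: kij; rewrite /= !inE !negb_or ![_ == m]eq_sym mk mi mj !andbT.
move: (no_m l) kijl; rewrite /= !inE !negb_or ![_ == l]eq_sym.
by case: (l != k); case: (l != i); case: (l != j); rewrite ?andbF.
Qed.

Lemma fourth_uniq {k i j m : 'I_4} : uniq [:: k; i; j; m] -> fourth k i j = m.
Proof.
move=> kijm; apply: (uniq4_last (fourthP _) kijm).
by move: kijm; rewrite /= !inE !negb_or => /and4P[/and3P[-> -> _] /andP[-> _] _ _].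
Qed.

Lemma fourth_perm (p : {perm 'I_4}) (k i j : 'I_4) : uniq [:: k; i; j] ->
  fourth (p k) (p i) (p j) = p (fourth k i j).
Proof.
by move=> kij; apply: fourth_uniq; have := fourthP kij; rewrite -(map_inj_uniq (@perm_inj _ p)).
Qed.

Lemma even4_tperm {a b c d x y : 'I_4} : uniq [:: a; b; c; d] -> x != y ->
  even4 (tperm x y a) (tperm x y b) (tperm x y c) (tperm x y d) = ~~ even4 a b c d.
Proof.
rewrite !permE /=.
by case_I4 a; case_I4 b; case_I4 c; case_I4 d => //; case_I4 x; case_I4 y.
Qed.

Lemma even4_perm (p : {perm 'I_4}) {a b c d : 'I_4} : uniq [:: a; b; c; d] ->
  even4 (p a) (p b) (p c) (p d) = even4 a b c d (+) odd_perm p.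
Proof.
case: (prod_tpermP p) => ts -> {p}.
elim: ts a b c d => [|[x y] ts IH] a b c d.
  by rewrite big_nil odd_perm1 !perm1 addbF.
rewrite big_cons /= => /andP[xy dp] abcd.
have abcd' : uniq [:: tperm x y a; tperm x y b; tperm x y c; tperm x y d].
  by rewrite (map_inj_uniq (@perm_inj _ (tperm x y)) [:: a; b; c; d]).
by rewrite !permM odd_permM odd_tperm xy IH // (even4_tperm abcd xy) addTb addNb addbN.
Qed.

Definition sign (b : bool) : int := if b then 1 else -1.

Definition orient_sign (k i j : 'I_4) : int := sign (even4 k i j (fourth k i j)).

Lemma orient_sign_odd_perm (p : {perm 'I_4}) (k i j : 'I_4) : odd_perm p -> uniq [:: k; i; j] ->
  orient_sign (p k) (p i) (p j) = - orient_sign k i j.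
Proof.
move=> odd_p kij; rewrite /orient_sign fourth_perm // (even4_perm p (fourthP kij)) odd_p.
by case: even4.
Qed.

Lemma sum_orient_sign (i j : 'I_4) :
  i != j -> \sum_(k < 4 | (k != i) && (k != j)) orient_sign k i j = 0.
Proof.
move=> ij; have [k1 k1ij] := exists_uniq3 ij.
have k12 := fourthP k1ij; set k2 := fourth k1 i j in k12 *.
have k21 := uniq4_swap_ends k12.
move: (k12) => /= /[!inE] /[!negb_or] /and4P[/and3P[k1i k1j k1k2] /andP[ij' ik2] jk2 _].
have k2i : k2 != i by rewrite eq_sym.
have k2j : k2 != j by rewrite eq_sym.
rewrite (bigD1 k1) ?k1i ?k1j //= (bigD1 k2) /=; last by rewrite k2i k2j eq_sym k1k2.
rewrite big1 ?addr0; last first.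
  move=> k /andP[/andP[/andP[ki kj] kk1] kk2]; case/negP: kk2; apply/eqP.
  by apply/esym/(uniq4_last k12); rewrite /= !inE !negb_or k1i k1j ij' ![_ == k]eq_sym ki kj kk1.
rewrite /orient_sign (fourth_uniq k21) -/k2.
have := even4_tperm k12 k1k2; rewrite tpermL tpermR !tpermD // => ->.
by case: even4.
Qed.

Section BoundaryOfTetrahedra.
Variables (T : triangulation) (top : tet T * 'I_4 -> bool).
Hypothesis glueK : forall x : tet T * 'I_4, glue (glue x) = x.
Hypothesis glue_neq : forall x : tet T * 'I_4, glue x != x.
Hypothesis top_glue : forall x : tet T * 'I_4, top (glue x) = ~~ top x.

Lemma bdE (t : tet T) (y : tet T * 'I_4) : bd top t y =
  (if t == y.1 then sign (top y) else 0) - (if t == (glue y).1 then sign (top y) else 0).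
Proof.
have sum_face (x : tet T * 'I_4) :
    \sum_(k < 4 | (t, k) == x) sign (top (t, k)) = if t == x.1 then sign (top x) else 0.
  case: x => s m /=; case: (eqVneq t s) => [<-|ts]; last first.
    by rewrite big_pred0 // => k; rewrite xpair_eqE (negbTE ts).
  by rewrite (big_pred1 m) // => k; rewrite /= xpair_eqE eqxx.
rewrite /bd (bigID (fun k => (t, k) == y)) /=.
rewrite (eq_bigl (fun k => (t, k) == y)) => [|k]; last by case: eqP; rewrite ?andbT ?andbF.
rewrite [X in _ + X](eq_bigl (fun k => (t, k) == glue y)) => [|k]; last first.
  rewrite (inv_eq glueK) /=; case: eqP => [->|] /=; last by rewrite andbT.
  by rewrite eq_sym (negbTE (glue_neq y)).
rewrite !sum_face top_glue; congr (_ + _).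
by case: ifP; rewrite ?oppr0 //; case: (top y).
Qed.

Lemma bd_glue (t : tet T) (y : tet T * 'I_4) : bd top t (glue y) = bd top t y.
Proof.
rewrite !bdE glueK top_glue.
by case: (top y); case: (t == y.1); case: (t == (glue y).1); rewrite /= ?subr0 ?sub0r ?opprK.
Qed.

Lemma sum_bd (R : pzRingType) (a : tet T -> R) (y : tet T * 'I_4) :
  \sum_t a t * (bd top t y)%:~R = (a y.1 - a (glue y).1) * (sign (top y))%:~R.
Proof.
have mul_if (b : bool) (s : int) (u : R) :
  u * (if b then s else 0)%:~R = if b then u * s%:~R else 0 by case: b; rewrite ?mulr0.
under eq_bigr => t _ do rewrite bdE intrB mulrBr !mul_if.
by rewrite sumrB -!big_mkcond !big_pred1_eq mulrBl.
Qed.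

Lemma edge_step_neq {f f' : tet T * 'I_4 * 'I_4} : edge_step f f' -> f'.1.2 != f'.2.
Proof.
case: f => [[s i] j] /existsP[k /and4P[_ _ ij /eqP ->]] /=.
by rewrite (inj_eq perm_inj).
Qed.

Lemma edge_eq_neq {f f' : tet T * 'I_4 * 'I_4} :
  f.1.2 != f.2 -> edge_eq f f' -> f'.1.2 != f'.2.
Proof.
move=> + /connectP[p + ->]; elim: p f => [|g p IH] f //= _ /andP[fg gp].
exact: IH (edge_step_neq fg) gp.
Qed.

Hypothesis gperm_face : forall x : tet T * 'I_4, gperm x x.2 = (glue x).2.
Hypothesis gperm_glue : forall x : tet T * 'I_4, gperm (glue x) = (gperm x)^-1%g.
Hypothesis gperm_odd : forall x : tet T * 'I_4, odd_perm (gperm x).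

(* [(s, i, j, k)] is the edge [ij] of [s] as an edge of the face of [s]
   opposite [k]; [cross] views it from the tetrahedron on the other side of
   that face. *)
Definition cross (p : tet T * 'I_4 * 'I_4 * 'I_4) : tet T * 'I_4 * 'I_4 * 'I_4 :=
  let: (s, i, j, k) := p in
  let g := gperm (s, k) in ((glue (s, k)).1, g i, g j, g k).

Lemma crossK : involutive cross.
Proof.
case=> [[[s i] j] k] /=; have /= gk := gperm_face (s, k).
by rewrite gk -surjective_pairing gperm_face glueK gperm_glue !permK.
Qed.

Definition incident (f : tet T * 'I_4 * 'I_4) (p : tet T * 'I_4 * 'I_4 * 'I_4) :=
  edge_eq f p.1 && ((p.2 != p.1.1.2) && (p.2 != p.1.2)).

Lemma incident_cross (f : tet T * 'I_4 * 'I_4) p :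
  f.1.2 != f.2 -> incident f p -> incident f (cross p).
Proof.
case: p => [[[s i] j] k] f_neq /andP[/= ff' /andP[/= ki kj]].
rewrite /incident /= !(inj_eq perm_inj) ki kj !andbT.
apply: (connect_trans ff'); apply: connect1; apply/existsP; exists k.
by rewrite ki kj eqxx andbT (edge_eq_neq f_neq ff').
Qed.

Lemma fsign_mul_bd (t s : tet T) (k i j : 'I_4) : fsign top s k i j * bd top t (s, k) =
  orient_sign k i j * ((t == s)%:R - (t == (glue (s, k)).1)%:R).
Proof.
rewrite bdE /fsign /orient_sign /sign /=.
by case: (top _); case: even4; case: (t == s); case: (t == _);
  rewrite ?(subrr, sub0r, subr0, opprK, mulr1, mul1r, mulr0, mulN1r, mulrN1, opprB, mulrN, mulNr).
Qed.

(* The terms in which [t] carries the edge cancel by [sum_orient_sign]; the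
   terms in which [t] lies across the face are permuted by the involution
   [cross], which flips their sign since gluings are odd. *)
Lemma edge_sum_bd (t : tet T) (f0 : tet T * 'I_4 * 'I_4) : f0.1.2 != f0.2 ->
  \sum_(f | edge_eq f0 f) \sum_(k | (k != f.1.2) && (k != f.2))
     fsign top f.1.1 k f.1.2 f.2 * bd top t (f.1.1, k) = 0.
Proof.
move=> f0_neq.
have same_tet : \sum_(f | edge_eq f0 f) \sum_(k | (k != f.1.2) && (k != f.2))
    orient_sign k f.1.2 f.2 * (t == f.1.1)%:R = 0.
  rewrite big1 // => f f0f; rewrite -big_distrl /= sum_orient_sign ?mul0r //.
  exact: edge_eq_neq f0_neq f0f.
under eq_bigr => f _ do (under eq_bigr => k _ do rewrite fsign_mul_bd mulrBr; rewrite sumrB).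
rewrite sumrB same_tet sub0r; apply/eqP; rewrite oppr_eq0; apply/eqP.
rewrite pair_big_dep (reindex_inj (inv_inj crossK)) /=.
rewrite (eq_bigl (incident f0)) => [|p]; last first.
  apply/idP/idP => [|]; last exact: incident_cross.
  by rewrite -[p in incident _ p]crossK; apply: incident_cross.
rewrite (eq_bigr (fun p => - (orient_sign p.2 p.1.1.2 p.1.2 * (t == p.1.1.1)%:R))); last first.
  case=> [[[s i] j] k] /andP[/= f0f /andP[/= ki kj]].
  have /= gk := gperm_face (s, k).
  rewrite gk -surjective_pairing glueK -gk orient_sign_odd_perm ?mulNr //=.
  by rewrite !inE negb_or ki kj (edge_eq_neq f0_neq f0f).
by move: same_tet; rewrite pair_big_dep sumrN => ->; rewrite oppr0.
Qed.

Lemma is_cycle_add_bd (R : pzRingType) (z : tet T * 'I_4 -> R) (n : tet T -> R) :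
  is_cycle top z -> is_cycle top (fun x => z x + \sum_t n t * (bd top t x)%:~R).
Proof.
case=> z_glue z_edge; split=> [x | t0 i0 j0 ij].
  by rewrite z_glue; under eq_bigr => t _ do rewrite bd_glue.
under eq_bigr => f _ do (under eq_bigr => k _ do rewrite mulrDr mulr_sumr; rewrite big_split /=).
rewrite big_split /= z_edge // add0r.
under eq_bigr => f _ do rewrite exchange_big /=.
rewrite exchange_big /= big1 // => t _.
under eq_bigr => f _ do (under eq_bigr => k _ do
  rewrite mulrzl mulrzr -mulrzA -mulrzr [bd _ _ _ * _]mulrC; rewrite -mulr_sumr).
under eq_bigr => f _ do rewrite -(raddf_sum ( *~%R (1 : R))).
by rewrite -mulr_sumr -raddf_sum /= edge_sum_bd // mulr0z mulr0.
Qed.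

End BoundaryOfTetrahedra.

Lemma floor_sign_ge0 (R : archiRealFieldType) (z : int) (b : bool) (a a' : R) :
  0 <= z%:~R + (a - a') * (sign b)%:~R ->
  0 <= z + (Num.floor a - Num.floor a') * sign b.
Proof.
move=> ge0; suff : (-1 : int)%:~R < (z + (Num.floor a - Num.floor a') * sign b)%:~R :> R.
  by rewrite ltr_int; lia.
have /andP[fa fa1] := floor_itv a; have /andP[fa' fa'1] := floor_itv a'.
rewrite !intrD in fa1 fa'1 *; rewrite intrM intrB.
by case: b ge0; rewrite /sign /= ?rmorph1 ?rmorphN1; lra.
Qed.

Theorem mainTheorem1 (R : realType) (T : triangulation)
    (top : tet T * 'I_4 -> bool) (right : tet T * 'I_4 * 'I_4 -> bool) :
  ideal_triangulation T -> (0 < #|tet T|)%N -> veering top right ->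
  forall z : tet T * 'I_4 -> int, is_cycle top z ->
  (exists w : tet T * 'I_4 -> R,
     [/\ is_cycle top w, (forall x, 0 <= w x) &
         exists c : tet T -> R,
           forall x, w x - (z x)%:~R = \sum_(t : tet T) c t * (bd top t x)%:~R]) ->
  exists v : tet T * 'I_4 -> int,
    [/\ is_cycle top v, (forall x, 0 <= v x) &
        exists n : tet T -> int,
          forall x, v x - z x = \sum_(t : tet T) n t * bd top t x].
Proof.
move=> [glueK glue_neq gperm_face gperm_glue [gperm_odd _]] _ [[top_glue _ _] _ _ _].
move=> z z_cycle [w [_ w_ge0 [c w_z]]].
pose n t := Num.floor (c t).
exists (fun x => z x + \sum_t n t * (bd top t x)%:~R); split.
- exact: is_cycle_add_bd.
- move=> x; rewrite sum_bd // intz; apply: floor_sign_ge0.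
  by rewrite -sum_bd // -w_z addrC subrK.
- by exists n => x; rewrite addrC addKr; under eq_bigr => t _ do rewrite intz.
Qed.
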